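(* Fix $n\ge1$ and $r\in[n]$. For each permutation $\pi$ of $[n]$ define the polynomial in the $n^2$ variables $x=[x_{i,j}]$ $$P_\pi(x)=\prod_{i=1}^n x_{i,\pi(i)}\sum_{T\in\mathcal{T}_r(n)}\prod_{(u,v)\in T}x_{u,\pi(v)}.$$ Then for every $x\in\mathcal{B}_n$, $$\sum_{\pi\in S_n}(\pi-x)\,P_\pi(x)=0,$$ where each permutation $\pi$ is identified with its $n\times n$ permutation matrix (entry $(i,j)$ equal to $1$ if $j=\pi(i)$ and $0$ otherwise).
   Context: $S_n$ is the set of permutations of $[n]$. $\mathcal{B}_n$ is the set of $n\times n$ doubly stochastic matrices (nonnegative entries, rows and columns summing to $1$). An arborescence rooted at $r$ on vertex set $[n]$ is a set $T$ of directed edges $(u,v)$ (meaning $u\to v$) on $[n]$ such that from every vertex there is exactly one directed path to $r$; $\mathcal{T}_r(n)$ is the set of all such arborescences. *)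

From HB Require Import structures.
From mathcomp Require Import all_boot all_order all_algebra all_fingroup.
From mathcomp Require Import boolp.
Set Implicit Arguments. Unset Strict Implicit. Unset Printing Implicit Defensive.
Import Order.TTheory GRing.Theory Num.Theory.
Local Open Scope ring_scope.

(* Vertex set [n] is 'I_n; a directed edge (u,v) means u -> v. *)

Definition doubly_stochastic (R : realFieldType) (n : nat) (x : 'M[R]_n) : Prop :=
  (forall i j, 0 <= x i j) /\
  (forall i, \sum_(j < n) x i j = 1) /\
  (forall j, \sum_(i < n) x i j = 1).

Definition is_arborescence (n : nat) (r : 'I_n) (T : {set 'I_n * 'I_n}) : Prop :=
  forall v : 'I_n,
    exists! p : seq 'I_n, path (fun a b => (a, b) \in T) v p && (last v p == r).

Definition Ppoly (R : realFieldType) (n : nat) (r : 'I_n) (s : 'S_n)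
    (x : 'M[R]_n) : R :=
  (\prod_(i < n) x i (s i)) *
  \sum_(T : {set 'I_n * 'I_n} | `[< is_arborescence r T >])
     \prod_(e in T) x e.1 (s e.2).

From HB Require Import structures.
From mathcomp Require Import all_boot all_order all_algebra all_fingroup.
From mathcomp Require Import boolp.
Set Implicit Arguments. Unset Strict Implicit. Unset Printing Implicit Defensive.
Import Order.TTheory GRing.Theory Num.Theory.

(* Call a weight y on the complete digraph balanced when every vertex has equal in- and
   out-weight. For balanced y the in-tree sum tree_sum y r does not depend on the root r.
   Indeed a tree rooted at s is a forest with roots r, s together with an edge from r into the
   component of s. The balance of y across the cut between the two components, together with
   the involution that moves a subtree from one component to the other, makes the two
   root-edge sums agree.

   The weights x_{u, pi v} are balanced for doubly stochastic x, so P_pi = x_{i, pi i} Q_pi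
   with the tree sum rerooted at i. The sum Phi k of Q_pi over pi with pi i = k does not
   depend on k. To see this, conjugate the trees by pi and expand the sum over bijections by
   Ryser's inclusion-exclusion. This turns Phi k into a signed sum of tree sums rooted at k for
   the symmetric, hence balanced, weights sum_{u in S} x_{u c} x_{u d}. Hence entry (i, j) of
   sum_pi P_pi pi is x_{i j} Phi, and so is entry (i, j) of sum_pi P_pi x. *)

Section FunctionalGraph.
Variable T : finType.
Implicit Types (f : T -> T) (F : {ffun T -> T}).
Local Notation sink f v := (iter #|T| f v).

Lemma iter_fix_after f a v k m : f a = a -> iter k f v = a -> k <= m -> iter m f v = a.
Proof. by move=> fa hk km; rewrite -(subnK km) iterD hk iter_fix. Qed.

Lemma sink_iter f a v k : f a = a -> iter k f v = a -> sink f v = a.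
Proof.
move=> fa hk; have c : fconnect f v a by rewrite -hk fconnect_iter.
apply: (iter_fix_after fa (iter_findex c)).
by apply: ltnW; apply: leq_trans (findex_max c) (max_card _).
Qed.

Lemma cycle_sink f a v k : f a = a -> iter k.+1 f v = v -> sink f v = a -> v = a.
Proof.
move=> fa hk hN; have iterM m : iter (m * k.+1) f v = v.
  by elim: m => // m IH; rewrite mulSn iterD IH hk.
by rewrite -(iterM #|T|); apply: (iter_fix_after fa hN); apply: leq_pmulr.
Qed.

Definition redirect F x z : {ffun T -> T} := [ffun v => if v == x then z else F v].

Lemma redirect_redirect F x a b : redirect (redirect F x a) x b = redirect F x b.
Proof. by apply/ffunP => v; rewrite !ffunE; case: eqP. Qed.

Lemma redirect_id F x : redirect F x (F x) = F.
Proof. by apply/ffunP => v; rewrite !ffunE; case: eqP => // ->. Qed.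

Lemma iter_redirect_avoid F x z v k : (forall m, m < k -> iter m F v != x) ->
  iter k (redirect F x z) v = iter k F v.
Proof.
elim: k => //= k IH avoid; rewrite IH => [|m /ltnW]; last exact: avoid.
by rewrite ffunE (negbTE (avoid k _)).
Qed.

Lemma iter_redirect_free F x z v k : (forall m, iter m F v != x) ->
  iter k (redirect F x z) v = iter k F v.
Proof. by move=> avoid; apply: iter_redirect_avoid. Qed.

Lemma iter_redirect_cases F x z v : (forall m, iter m F v != x) \/
  exists m, iter m F v = x /\ iter m (redirect F x z) v = x.
Proof.
have [hit | avoid] := pselect (exists m, iter m F v == x); last first.
  by left => m; apply/negP => hm; apply: avoid; exists m.
right; have [m /eqP hm hmin] := ex_minnP hit.
exists m; split => //; rewrite iter_redirect_avoid // => k ltkm.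
by apply/eqP => hk; have := hmin k (introT eqP hk); rewrite leqNgt ltkm.
Qed.

(* Arborescences rooted at [r] are encoded by parent functions with [F r = r];
   see [parent_edges] for the edge set. *)
Definition tree_at r F := (F r == r) && [forall v, sink F v == r].

Definition forest2 r s F :=
  [&& F r == r, F s == s & [forall v, (sink F v == r) || (sink F v == s)]].

Lemma forest2C r s F : forest2 r s F = forest2 s r F.
Proof.
rewrite /forest2 andbCA; congr (_ && (_ && _)).
by apply: eq_forallb => v; rewrite orbC.
Qed.

Lemma tree_redirect_root r s F w : r != s -> F r = r ->
  tree_at s (redirect F r w) = forest2 r s F && (sink F w == s).
Proof.
move=> rs Fr; have Gs_Fs : redirect F r w s = F s by rewrite ffunE eq_sym (negbTE rs).
apply/idP/idP => [/andP [/eqP Gs /forallP Gsink] | ].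
  have Fs : F s = s by rewrite -Gs_Fs.
  rewrite /forest2 Fr Fs !eqxx /=; apply/andP; split.
    apply/forallP => v; case: (iter_redirect_cases F r w v) => [av | [m [hm _]]].
      by rewrite -(iter_redirect_free w _ av) Gsink orbT.
    by rewrite (sink_iter Fr hm) eqxx.
  case: (iter_redirect_cases F r w w) => [av | [m [_ hm]]].
    by rewrite -(iter_redirect_free w _ av) Gsink.
  have back : iter m.+1 (redirect F r w) w = w by rewrite iterS hm ffunE eqxx.
  by rewrite (cycle_sink Gs back (eqP (Gsink w))) iter_fix.
case/andP => /and3P [_ /eqP Fs /forallP Fsink] /eqP Fw.
have Gs : redirect F r w s = s by rewrite Gs_Fs.
rewrite /tree_at Gs eqxx /=; apply/forallP => v.
have avoid_r m : iter m F w != r.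
  apply/eqP => e; have := iter_fix_after Fr e (leq_addr #|T| m).
  by rewrite iterD Fw iter_fix // => sr; rewrite sr eqxx in rs.
case: (iter_redirect_cases F r w v) => [av | [m [_ hm]]].
  rewrite iter_redirect_free //; case/orP: (Fsink v) => // /eqP e.
  by move: (av #|T|); rewrite e eqxx.
apply/eqP; apply: (sink_iter (k := #|T| + m.+1) Gs).
by rewrite iterD iterS hm ffunE eqxx iter_redirect_free.
Qed.

Lemma forest_graft r s F b a : r != s -> forest2 r s F ->
  b != s -> sink F b = s -> sink F a = r ->
  [/\ forest2 r s (redirect F b a), b != r, sink (redirect F b a) b = r &
      sink (redirect F b a) (F b) = s].
Proof.
move=> rs /and3P [/eqP Fr /eqP Fs /forallP Fsink] bs Fb Fa.
have br : b != r.
  by apply: contra_neq rs => br; rewrite -Fb br iter_fix.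
set G := redirect F b a.
have Gr : G r = r by rewrite ffunE eq_sym (negbTE br).
have Gs : G s = s by rewrite ffunE eq_sym (negbTE bs).
have a_avoid m : iter m F a != b.
  apply: contra_neq rs => e; have := iter_fix_after Fr Fa (leq_addr m #|T|).
  by rewrite iterD e Fb => ->.
have Fb_avoid m : iter m F (F b) != b.
  apply: contra_neq bs => e; have e1 : iter m.+1 F b = b by rewrite iterSr.
  by rewrite (cycle_sink Fs e1 Fb).
have Gb : sink G b = r.
  apply: (sink_iter (k := #|T|.+1) Gr).
  by rewrite iterSr /G ffunE eqxx iter_redirect_free.
have GFb : sink G (F b) = s.
  by rewrite /G iter_redirect_free // -iterSr; apply: iter_fix_after Fs Fb (leqnSn _).
split => //; rewrite /forest2 Gr Gs !eqxx /=; apply/forallP => v.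
case: (iter_redirect_cases F b a v) => [av | [m [_ hm]]].
  by rewrite /G iter_redirect_free.
have : iter (#|T| + m) G v = r by rewrite iterD hm.
by move/(sink_iter Gr) => ->; rewrite eqxx.
Qed.

(* The old parent of [b] is kept in the triple so that [graft] is an involution. *)
Definition graft (q : {ffun T -> T} * T * T) : {ffun T -> T} * T * T :=
  (redirect q.1.1 q.1.2 q.2, q.1.2, q.1.1 q.1.2).

Lemma graftK : involutive graft.
Proof. by move=> [[F b] a]; rewrite /graft /= redirect_redirect redirect_id ffunE eqxx. Qed.

Definition graftable r s (q : {ffun T -> T} * T * T) :=
  [&& forest2 r s q.1.1, q.1.2 != s, sink q.1.1 q.1.2 == s & sink q.1.1 q.2 == r].

Lemma graftable_graftW r s q : r != s -> graftable r s q -> graftable s r (graft q).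
Proof.
case: q => [[F b] a] rs /and4P [hf bs /eqP hb /eqP ha].
have [hf' br hb' hc] := forest_graft rs hf bs hb ha.
by rewrite /graftable /= -forest2C hf' br hb' hc !eqxx.
Qed.

Lemma graftable_graft r s q : r != s -> graftable s r (graft q) = graftable r s q.
Proof.
move=> rs; apply/idP/idP; last exact: graftable_graftW.
by move/(graftable_graftW (r := s)); rewrite graftK; apply; rewrite eq_sym.
Qed.

Definition perm_conj (s : {perm T}) F : {ffun T -> T} := [ffun i => s (F ((s^-1)%g i))].

Lemma iter_perm_conj (s : {perm T}) F k v :
  iter k (perm_conj s F) v = s (iter k F ((s^-1)%g v)).
Proof. by elim: k => [|k IH] /=; rewrite ?permKV // IH ffunE permK. Qed.

Lemma perm_conjK (s : {perm T}) : cancel (perm_conj s) (perm_conj s^-1).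
Proof. by move=> F; apply/ffunP => i; rewrite !ffunE invgK !permK. Qed.

Lemma tree_at_perm_conj (s : {perm T}) r F : tree_at (s r) (perm_conj s F) = tree_at r F.
Proof.
rewrite /tree_at ffunE permK (inj_eq perm_inj); congr (_ && _).
apply/forallP/forallP => sink_r v; last by rewrite iter_perm_conj (inj_eq perm_inj).
by have := sink_r (s v); rewrite iter_perm_conj permK (inj_eq perm_inj).
Qed.

End FunctionalGraph.

Section TreeSum.
Variables (K : comRingType) (T : finType).
Implicit Types (y : T -> T -> K) (F : {ffun T -> T}).
Local Notation sink f v := (iter #|T| f v).
Local Open Scope ring_scope.

Definition tree_sum y r := \sum_(F | tree_at r F) \prod_(u | u != r) y u (F u).

Definition forest_weight r s y F := \prod_(u | (u != r) && (u != s)) y u (F u).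

Definition balanced y := forall v, \sum_w y v w = \sum_w y w v.

Lemma forest_weightC r s y F : forest_weight r s y F = forest_weight s r y F.
Proof. by apply: eq_bigl => u; rewrite andbC. Qed.

Lemma tree_sum_forestE r s y : r != s ->
  tree_sum y s = \sum_(F | forest2 r s F)
                   forest_weight r s y F * \sum_(w | sink F w == s) y r w.
Proof.
move=> rs; rewrite /tree_sum.
rewrite (reindex_onto (fun q : {ffun T -> T} * T => redirect q.1 r q.2)
                      (fun F => (redirect F r r, F r))) /=; last first.
  by move=> F _; rewrite redirect_redirect redirect_id.
under [RHS]eq_bigr do rewrite mulr_sumr.
rewrite pair_big_dep; apply: eq_big => [[F w] | [F w] _] /=.
  rewrite redirect_redirect ffunE eqxx xpair_eqE eqxx andbT.
  have [Fr | Fr] := eqVneq (F r) r.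
    have -> : redirect F r r = F by rewrite -[RHS](redirect_id F r) Fr.
    by rewrite eqxx andbT tree_redirect_root.
  rewrite /forest2 (negbTE Fr) /=; apply/negP => /andP [_ /eqP GF]; move: Fr.
  by rewrite -GF ffunE !eqxx.
rewrite (bigD1 r) //= ffunE eqxx mulrC; congr (_ * _).
apply: eq_big => [u | u /andP [_ ur]]; first by rewrite andbC.
by rewrite ffunE (negbTE ur).
Qed.

Lemma balanced_cut y (A : pred T) : balanced y ->
  \sum_(b | A b) \sum_(a | ~~ A a) y b a = \sum_(b | ~~ A b) \sum_(a | A a) y b a.
Proof.
move=> bal.
have : \sum_(b | A b) (\sum_(a | A a) y b a + \sum_(a | ~~ A a) y b a) =
       \sum_(b | A b) (\sum_(a | A a) y a b + \sum_(a | ~~ A a) y a b).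
  by apply: eq_bigr => b _; move: (bal b); rewrite (bigID A) [in RHS](bigID A).
rewrite !big_split /=.
by rewrite [X in _ = X + _]exchange_big [X in _ = _ + X]exchange_big => /addrI.
Qed.

Lemma forest_weight_redirect r s y F b a : b != r -> b != s ->
  forest_weight r s y (redirect F b a) * y b (F b) = forest_weight r s y F * y b a.
Proof.
move=> br bs; rewrite /forest_weight (bigD1 b) /=; last by rewrite br bs.
rewrite [in RHS](bigD1 b) /=; last by rewrite br bs.
rewrite ffunE eqxx mulrAC [RHS]mulrAC [y b a * _]mulrC; congr (_ * _ * _).
by apply: eq_bigr => u /andP [_ ub]; rewrite ffunE (negbTE ub).
Qed.

Lemma sum_graftable_swap r s y : r != s ->
  \sum_(q | graftable r s q) forest_weight r s y q.1.1 * y q.1.2 q.2 =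
  \sum_(q | graftable s r q) forest_weight s r y q.1.1 * y q.1.2 q.2.
Proof.
move=> rs; rewrite [RHS](reindex_inj (inv_inj (@graftK T))).
apply: eq_big => q; first by rewrite graftable_graft.
case: q => [[F b] a] /and4P [hf bs /eqP hb /eqP ha].
have [_ br _ _] := forest_graft rs hf bs hb ha.
by rewrite /= [in RHS]forest_weightC forest_weight_redirect.
Qed.

Lemma sum_graftableE r s y :
  \sum_(q | graftable r s q) forest_weight r s y q.1.1 * y q.1.2 q.2 =
  \sum_(F | forest2 r s F) forest_weight r s y F *
     \sum_(b | (b != s) && (sink F b == s)) \sum_(a | sink F a == r) y b a.
Proof.
pose wt F b a := forest_weight r s y F * y b a.
pose Pb F b := (b != s) && (sink F b == s).
pose Pa F a := sink F a == r.
transitivity (\sum_(F | forest2 r s F) \sum_(b | Pb F b) \sum_(a | Pa F a) wt F b a).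
  rewrite (pair_big_dep _ Pb (fun F b => \sum_(a | Pa F a) wt F b a)) /=.
  rewrite (pair_big_dep (fun q => forest2 r s q.1 && Pb q.1 q.2) (fun q => Pa q.1)
                        (fun q a => wt q.1 q.2 a)) /=.
  by apply: eq_bigl => q; rewrite /graftable !andbA.
by apply: eq_bigr => F _; rewrite mulr_sumr; apply: eq_bigr => b _; rewrite mulr_sumr.
Qed.

Lemma forest_cut_sink r s y F : balanced y -> r != s -> forest2 r s F ->
  \sum_(w | sink F w == s) y r w +
    \sum_(b | (b != r) && (sink F b == r)) \sum_(a | sink F a == s) y b a =
  \sum_(w | sink F w == r) y s w +
    \sum_(b | (b != s) && (sink F b == s)) \sum_(a | sink F a == r) y b a.
Proof.
move=> bal rs /and3P [/eqP Fr /eqP Fs /forallP Fsink].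
have root_split c (G : T -> K) : F c = c ->
    \sum_(b | sink F b == c) G b = G c + \sum_(b | (b != c) && (sink F b == c)) G b.
  move=> Fc; rewrite (bigD1 c) /= ?iter_fix //; congr (_ + _).
  by apply: eq_bigl => b; rewrite andbC.
have sink_s v : (sink F v == s) = ~~ (sink F v == r).
  by case/orP: (Fsink v) => /eqP ->; rewrite eqxx ?(negbTE rs) // eq_sym (negbTE rs).
rewrite -!root_split //.
under eq_bigr do rewrite (eq_bigl _ _ sink_s).
rewrite (eq_bigl _ _ sink_s); exact: (balanced_cut (fun v => sink F v == r) bal).
Qed.

Lemma tree_sum_root_invariant y r s : balanced y -> tree_sum y r = tree_sum y s.
Proof.
move=> bal; have [-> // | rs] := eqVneq r s.
rewrite (tree_sum_forestE y rs) (tree_sum_forestE y (r := s) (s := r)) 1?eq_sym //.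
under eq_bigl do rewrite forest2C; under eq_bigr do rewrite forest_weightC.
apply: (addIr (\sum_(F | forest2 r s F) forest_weight r s y F *
   \sum_(b | (b != s) && (sink F b == s)) \sum_(a | sink F a == r) y b a)).
rewrite -[X in _ = _ + X]sum_graftableE sum_graftable_swap // sum_graftableE.
under [X in _ = _ + X]eq_bigl do rewrite forest2C.
under [X in _ = _ + X]eq_bigr do rewrite forest_weightC.
rewrite -!big_split; apply: eq_bigr => F hF /=.
by rewrite -!mulrDr (forest_cut_sink bal rs hF).
Qed.

End TreeSum.

Section Arborescence.
Variables (n : nat) (r : 'I_n).
Local Notation T := 'I_n.
Local Notation edge E := (fun a b => (a, b) \in E).
Implicit Types (F : {ffun T -> T}) (E : {set T * T}).

Definition parent_edges F : {set T * T} := (fun u => (u, F u)) @: [set u | u != r].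

Lemma mem_parent_edges F a b : ((a, b) \in parent_edges F) = (a != r) && (b == F a).
Proof.
apply/imsetP/andP => [[u] | [ar /eqP ->]]; first by rewrite inE => ur [-> ->].
by exists a; rewrite // inE.
Qed.

Lemma path_parent_edges F v q : path (edge (parent_edges F)) v q ->
  q = traject F (F v) (size q) /\ forall i, i < size q -> iter i F v != r.
Proof.
elim: q v => [|w q IH] v //=.
case/andP; rewrite mem_parent_edges => /andP [vr /eqP ->] /IH [q_traj avoid].
split; first by congr (_ :: _).
by case=> [|i] lti //=; rewrite -iterS iterSr; apply: avoid.
Qed.

Lemma traject_path_parent_edges F v k : (forall i, i < k -> iter i F v != r) ->
  path (edge (parent_edges F)) v (traject F (F v) k).
Proof.
elim: k v => [|k IH] v avoid //=.
rewrite mem_parent_edges eqxx andbT (avoid 0) //=; apply: IH => i lti.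
by rewrite -iterSr; apply: avoid.
Qed.

Lemma tree_at_arborescence F : tree_at r F -> is_arborescence r (parent_edges F).
Proof.
case/andP => /eqP Fr /forallP Fsink v.
have [k /eqP Fk kmin] := ex_minnP (ex_intro (fun k => iter k F v == r) _ (Fsink v)).
have avoid i : i < k -> iter i F v != r.
  by move=> ltik; apply: contraTneq ltik => /eqP/kmin; rewrite leqNgt.
exists (traject F (F v) k); split.
  by rewrite traject_path_parent_edges // last_traject Fk eqxx.
move=> q /andP [/path_parent_edges [q_traj q_avoid] /eqP q_last].
have Fq : iter (size q) F v = r by rewrite -q_last [in RHS]q_traj last_traject.
suff <- : size q = k by [].
apply/eqP; rewrite eqn_leq kmin ?Fq ?eqxx // leqNgt andbT.
by apply: contraTN (eqxx r) => /q_avoid; rewrite Fk.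
Qed.

Lemma arborescence_tree_at F : F r = r -> is_arborescence r (parent_edges F) -> tree_at r F.
Proof.
move=> Fr arbF; rewrite /tree_at Fr eqxx; apply/forallP => v.
have [q [/andP [/path_parent_edges [q_traj _] /eqP q_last] _]] := arbF v.
apply/eqP; apply: (sink_iter (k := size q) Fr).
by rewrite -q_last [in RHS]q_traj last_traject.
Qed.

Definition parent_fun E : {ffun T -> T} :=
  [ffun u => if u == r then r else odflt r [pick w | (u, w) \in E]].

Lemma parent_edgesK F : F r = r -> parent_fun (parent_edges F) = F.
Proof.
move=> Fr; apply/ffunP => u; rewrite ffunE.
have [-> // | ur] := eqVneq u r.
case: pickP => [w | /(_ (F u))]; first by rewrite mem_parent_edges ur => /eqP.
by rewrite mem_parent_edges ur eqxx.
Qed.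

Lemma arborescence_out_edge E u w : is_arborescence r E -> (u, w) \in E ->
  u != r /\ forall w', (u, w') \in E -> w' = w.
Proof.
move=> arbE uw; have [q0 [_ uniq_u]] := arbE u.
have via w' : (u, w') \in E -> exists qw, q0 = w' :: qw.
  move=> uw'; have [qw [/andP [pw lw] _]] := arbE w'.
  by exists qw; apply: uniq_u; rewrite /= uw' pw.
have [qw q0E] := via w uw.
split=> [|w' /via [qw' q0E']]; last by move: q0E'; rewrite q0E => -[].
apply/eqP => ur; suff : q0 = [::] by rewrite q0E.
by apply: uniq_u; rewrite /= ur eqxx.
Qed.

Lemma parent_funK E : is_arborescence r E -> parent_edges (parent_fun E) = E.
Proof.
move=> arbE; apply/setP => -[a b]; rewrite mem_parent_edges ffunE.
have [ar | ar] /= := eqVneq a r.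
  by apply/esym/negP => /(arborescence_out_edge arbE) []; rewrite ar eqxx.
case: pickP => [w aw | no_out].
  have [_ uniq_a] := arborescence_out_edge arbE aw.
  by apply/eqP/idP => [-> // | /uniq_a].
have [[|w q] [/andP [pq /eqP lq] _]] := arbE a; first by rewrite -lq eqxx in ar.
by case/andP: pq => aw _; move: (no_out w); rewrite aw.
Qed.

Local Open Scope ring_scope.

Lemma arborescence_sum (K : comRingType) (f : T * T -> K) :
  \sum_(E : {set T * T} | `[< is_arborescence r E >]) \prod_(e in E) f e =
  \sum_(F | tree_at r F) \prod_(u | u != r) f (u, F u).
Proof.
rewrite (reindex_onto parent_edges parent_fun); last by move=> E /asboolP /parent_funK.
apply: eq_big => F.
  apply/andP/idP => [[/asboolP arbF /eqP FK] | treeF].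
    by apply: arborescence_tree_at arbF; rewrite -FK ffunE eqxx.
  have /andP [/eqP Fr _] := treeF.
  by rewrite parent_edgesK // eqxx; split=> //; apply/asboolP/tree_at_arborescence.
move=> _; rewrite big_imset /=; last by move=> u w _ _ [].
by apply: eq_bigl => u; rewrite inE.
Qed.

End Arborescence.

Section SignedSupersets.
Variables (K : comRingType) (T : finType).
Implicit Types (A U S : {set T}).
Local Open Scope ring_scope.

Lemma sum_signed_supsets_eq0 A U e : e \in U -> e \notin A ->
  \sum_(S : {set T} | S \subset U) (-1) ^+ #|U :\: S| * (A \subset S)%:R = 0 :> K.
Proof.
move=> eU eA; pose toggle (S : {set T}) := if e \in S then S :\ e else e |: S.
have toggleK : involutive toggle.
  move=> S; rewrite /toggle; have [eS | eS] := boolP (e \in S).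
    by rewrite setD11 setD1K.
  by rewrite setU11 setU1K.
rewrite (bigID (fun S : {set T} => e \in S)) /= [X in X + _](reindex_inj (inv_inj toggleK)) /=.
rewrite (eq_bigl (fun S : {set T} => (S \subset U) && (e \notin S))); last first.
  move=> S; rewrite /toggle; case: ifP => eS /=; first by rewrite setD11 !andbF.
  by rewrite subUset sub1set eU !inE eqxx !andbT.
rewrite -big_split /=; apply: big1 => S /andP [SU eS]; rewrite /toggle (negbTE eS).
have -> : #|U :\: S| = #|U :\: (e |: S)|.+1.
  rewrite (cardsD1 e) inE eU eS add1n; congr _.+1.
  by apply: eq_card => z; rewrite !inE negb_or andbA.
have -> : (A \subset e |: S) = (A \subset S).
  apply/idP/idP => [/subsetP AeS | /subset_trans]; last by apply; apply: subsetUr.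
  apply/subsetP => z zA; move: (AeS z zA); rewrite !inE => /orP [/eqP ez | //].
  by move: eA; rewrite -ez zA.
by rewrite exprS mulN1r mulNr addrN.
Qed.

Lemma sum_signed_supsets A U :
  \sum_(S : {set T} | S \subset U) (-1) ^+ #|U :\: S| * (A \subset S)%:R = (A == U)%:R :> K.
Proof.
have [UA | /subsetPn [e eU eA]] := boolP (U \subset A); last first.
  have AU : A != U by apply: contraNneq eA => ->.
  by rewrite (sum_signed_supsets_eq0 eU eA) (negbTE AU).
have [AU | AU] := boolP (A \subset U); last first.
  rewrite (negbTE (contraNneq _ AU)) => [|->]; last exact: subxx.
  apply: big1 => S SU; have AS : ~~ (A \subset S) by apply: contra AU => /subset_trans; apply.
  by rewrite (negbTE AS) mulr0.
have <- : A = U by apply/eqP; rewrite eqEsubset AU UA.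
rewrite eqxx (bigD1 A) //= setDv cards0 subxx mul1r big1 ?addr0 // => S /andP [SA SnA].
have AS : ~~ (A \subset S) by apply: contra SnA => AS; rewrite eqEsubset SA AS.
by rewrite (negbTE AS) mulr0.
Qed.

End SignedSupersets.

Section PermTreeSum.
Variables (K : comRingType) (T : finType) (x : T -> T -> K).
Implicit Types (g : {ffun T -> T}) (S : {set T}).
Local Open Scope ring_scope.

Definition gram S c d := \sum_(u in S) x u c * x u d.

Definition pair_weight g (phi : T -> T) j :=
  \prod_(c | c != j) (x (phi c) c * x (phi c) (g c)).

Definition perm_tree_weight r (s : {perm T}) :=
  (\prod_i x i (s i)) * tree_sum (fun u v => x u (s v)) r.

Definition perm_tree_sum r j := \sum_(s : {perm T} | s r == j)
  (\prod_(i | i != r) x i (s i)) * tree_sum (fun u v => x u (s v)) r.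

Lemma prod_gram_expand S g r j :
  \prod_(c | c != j) gram S c (g c) =
  \sum_(phi : {ffun T -> T})
     ((phi j == r) && (phi @: [set~ j] \subset S))%:R * pair_weight g phi j.
Proof.
(* The factor at [c = j] pins [phi j = r]. *)
pose B c u := if c == j then (u == r)%:R else (u \in S)%:R * (x u c * x u (g c)).
have <- : \prod_c \sum_u B c u = \prod_(c | c != j) gram S c (g c).
  rewrite (bigD1 j) //= {1}/B eqxx (bigD1 r) //= eqxx big1 ?addr0 ?mul1r.
    apply: eq_bigr => c /negbTE cj; rewrite /gram [RHS]big_mkcond /=.
    by apply: eq_bigr => u; rewrite /B cj; case: (u \in S); rewrite ?mul1r ?mul0r.
  by move=> u /negbTE ->.
rewrite bigA_distr_bigA; apply: eq_bigr => phi _.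
rewrite (bigD1 j) //= {1}/B eqxx -mulnb natrM -mulrA; congr (_ * _).
have in_S : \prod_(c | c != j) (phi c \in S)%:R = (phi @: [set~ j] \subset S)%:R :> K.
  rewrite sub_imset_pre.
  have [/subsetP sub | /subsetPn [c]] := boolP ([set~ j] \subset phi @^-1: S).
    by apply: big1 => c cj; move: (sub c); rewrite !inE cj => /(_ isT) ->.
  by rewrite !inE => cj phicS; rewrite (bigD1 c) //= (negbTE phicS) mul0r.
rewrite -in_S -big_split; apply: eq_bigr => c /negbTE cj.
by rewrite /B cj.
Qed.

Lemma sum_signed_tree_sum_gram (r j : T) :
  \sum_(S : {set T} | S \subset [set~ r]) (-1) ^+ #|[set~ r] :\: S| * tree_sum (gram S) j =
  \sum_(g | tree_at j g) \sum_(phi : {ffun T -> T} |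
     (phi j == r) && (phi @: [set~ j] == [set~ r])) pair_weight g phi j.
Proof.
rewrite /tree_sum; under eq_bigr do rewrite mulr_sumr.
rewrite exchange_big /=; apply: eq_bigr => g _.
under eq_bigr do rewrite (prod_gram_expand _ _ r) mulr_sumr.
rewrite exchange_big /= [RHS]big_mkcond /=; apply: eq_bigr => phi _.
transitivity ((phi j == r)%:R * pair_weight g phi j *
   \sum_(S : {set T} | S \subset [set~ r])
      (-1) ^+ #|[set~ r] :\: S| * (phi @: [set~ j] \subset S)%:R).
  rewrite mulr_sumr; apply: eq_bigr => S _; rewrite -mulnb natrM.
  rewrite mulrCA -!mulrA; congr (_ * _).
  by rewrite mulrCA [RHS]mulrCA [_ * pair_weight _ _ _]mulrC.
(* Inclusion-exclusion keeps only the [phi] mapping [[set~ j]] onto [[set~ r]]. *)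
rewrite sum_signed_supsets; case: (phi j == r); last by rewrite !mul0r.
by rewrite mul1r; case: eqP; rewrite ?mulr1 ?mulr0.
Qed.

Lemma perm_imsetC1 (s : {perm T}) j : s @: [set~ j] = [set~ s j].
Proof.
apply/eqP; rewrite eqEcard card_imset ?cardsC1 ?leqnn ?andbT; last exact: perm_inj.
by apply/subsetP => _ /imsetP [c cj ->]; rewrite in_setC1 (inj_eq perm_inj) -in_setC1.
Qed.

Lemma imset_setC1_inj (phi : T -> T) j r :
  phi j = r -> phi @: [set~ j] = [set~ r] -> injective phi.
Proof.
move=> phij im; have phic c : c != j -> phi c != r.
  by move=> cj; rewrite -in_setC1 -im; apply: imset_f; rewrite in_setC1.
have inj : {in [set~ j] &, injective phi} by apply/imset_injP; rewrite im !cardsC1.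
move=> a b e; have [aj | aj] := eqVneq a j; have [bj | bj] := eqVneq b j.
- by rewrite aj bj.
- by move: (phic b bj); rewrite -e aj phij eqxx.
- by move: (phic a aj); rewrite e bj phij eqxx.
- by apply: inj; rewrite ?in_setC1.
Qed.

Lemma sum_perm_pair_weight g r j :
  \sum_(s : {perm T} | s j == r) pair_weight g s j =
  \sum_(phi : {ffun T -> T} | (phi j == r) && (phi @: [set~ j] == [set~ r]))
     pair_weight g phi j.
Proof.
rewrite [RHS](reindex_onto (fun s : {perm T} => pval s) (insubd (1%g : {perm T}))) /=.
  apply: eq_big => s; last by rewrite pvalE.
  rewrite valKd eqxx andbT pvalE.
  by have [sj | //] := eqVneq (s j) r; rewrite perm_imsetC1 sj eqxx.
move=> phi /andP [/eqP phij /eqP im]; apply: insubdK.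
by rewrite unfold_in; apply/injectiveP; apply: imset_setC1_inj phij im.
Qed.

Lemma perm_tree_sumE r j : perm_tree_sum r j =
  \sum_(g | tree_at j g) \sum_(s : {perm T} | s j == r) pair_weight g s j.
Proof.
rewrite /perm_tree_sum /tree_sum; under eq_bigr do rewrite mulr_sumr.
rewrite (reindex_inj (@invg_inj {perm T})) [RHS]exchange_big /=.
apply: eq_big => s; first by rewrite -(inj_eq (@perm_inj _ s)) permKV eq_sym.
move=> /eqP sj'; have sj : s j = r by rewrite -sj' permKV.
rewrite (reindex (perm_conj s)) /=; last first.
  exists (perm_conj s^-1) => g _; first exact: perm_conjK.
  by have := perm_conjK s^-1 g; rewrite invgK.
apply: eq_big => g; first by rewrite -sj tree_at_perm_conj.
move=> _; rewrite -big_split /= /pair_weight (reindex_inj (@perm_inj _ s)) /=.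
apply: eq_big => c; first by rewrite -sj (inj_eq perm_inj).
by move=> _; rewrite ffunE !permK.
Qed.

Lemma perm_tree_sum_const r j k : perm_tree_sum r j = perm_tree_sum r k.
Proof.
have signedE j' : perm_tree_sum r j' = \sum_(S : {set T} | S \subset [set~ r])
    (-1) ^+ #|[set~ r] :\: S| * tree_sum (gram S) j'.
  rewrite perm_tree_sumE sum_signed_tree_sum_gram.
  by apply: eq_bigr => g _; apply: sum_perm_pair_weight.
rewrite !signedE; apply: eq_bigr => S _; congr (_ * _).
apply: tree_sum_root_invariant => v; apply: eq_bigr => w _.
by apply: eq_bigr => u _; rewrite mulrC.
Qed.

Lemma sum_perm_tree_weight_sub_eq0 r i j :
  (forall i, \sum_j x i j = 1) -> (forall j, \sum_i x i j = 1) ->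
  \sum_(s : {perm T}) perm_tree_weight r s * ((s i == j)%:R - x i j) = 0.
Proof.
move=> rows cols.
pose Q (s : {perm T}) := (\prod_(u | u != i) x u (s u)) * tree_sum (fun u v => x u (s v)) i.
have weightE (s : {perm T}) : perm_tree_weight r s = x i (s i) * Q s.
  rewrite /perm_tree_weight (tree_sum_root_invariant r i).
    by rewrite (bigD1 i) //= mulrA.
  move=> v; rewrite (reindex_inj (@perm_inj _ s^-1)) /=.
  by under eq_bigr do rewrite permKV; rewrite rows cols.
have fiberE k : \sum_(s : {perm T} | s i == k) x i (s i) * Q s = x i k * perm_tree_sum i k.
  by rewrite /perm_tree_sum mulr_sumr; apply: eq_bigr => s /eqP <-.
rewrite (partition_big (fun s : {perm T} => s i) xpredT) //=.
under eq_bigr => k _.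
  rewrite (eq_bigr (fun s : {perm T} => x i (s i) * Q s * ((k == j)%:R - x i j))); last first.
    by move=> s /eqP <-; rewrite weightE.
  rewrite -mulr_suml fiberE (perm_tree_sum_const i k j) mulrAC mulrBr.
  over.
rewrite /= -mulr_suml sumrB -mulr_suml rows mul1r.
rewrite (bigD1 j) //= eqxx mulr1 big1 ?addr0 ?subrr ?mul0r // => k /negbTE ->.
by rewrite mulr0.
Qed.

End PermTreeSum.

Unset Implicit Arguments.
Local Open Scope ring_scope.

Theorem proposition3p5 (R : realFieldType) (n : nat) (hn : (0 < n)%N)
    (r : 'I_n) (x : 'M[R]_n) :
  doubly_stochastic x ->
  \sum_(s : 'S_n) Ppoly r s x *: (perm_mx s - x) = 0.
Proof.
move=> [_ [rows cols]].
have PpolyE s : Ppoly r s x = perm_tree_weight x r s.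
  by rewrite /Ppoly (arborescence_sum r (fun e => x e.1 (s e.2))).
apply/matrixP => i j; rewrite summxE !mxE.
under eq_bigr do rewrite !mxE PpolyE.
exact: sum_perm_tree_weight_sub_eq0.
Qed.
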